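(* In the setting described in the context (no inter-cell interference), suppose the target rates $R_k,R_{\tilde k}>0$ satisfy $$R_{\tilde k}<\log_2\left(1+\frac{\beta_{\tilde k}^2|\mu_k|^2}{\sum_{i=1}^K|\boldsymbol\psi_i^{\mathrm H}\boldsymbol\nu_1|^2+\beta_k^2\beta_{\tilde k}^2|\mu_k|^2+\frac{\sigma_k^2}{P\ell(d_k)}}\right),\qquad R_k<\log_2\left(1+\frac{|\mu_k|^2\beta_k^2}{\sum_{i=1}^K|\boldsymbol\psi_i^{\mathrm H}\boldsymbol\nu_2|^2+\frac{\sigma_k^2}{P\ell(d_k)}}\right).$$ Then the near-user outage probability $$p_k=\Pr\left(\log_2(1+\mathrm{SINR}_{k\to\tilde k})<R_{\tilde k}\ \text{ or }\ \log_2(1+\mathrm{SINR}_k)<R_k\right)$$ tends to $0$ as $\sigma_h^2\to0$ (equivalently, as the channel K factor $\mathcal K=\|\hat{\mathbf H}\|_F^2/(\sigma_h^2\mathrm{Tr}(\mathbf R_t)\mathrm{Tr}(\mathbf R_r))\to\infty$), with all other quantities held fixed.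
   Context: Let $K\le\min\{M,N\}$ be positive integers and $k\in\{1,\dots,K\}$. Fix $\hat{\mathbf H}\in\mathbb C^{N\times M}$, Hermitian positive definite $\mathbf R_r\in\mathbb C^{N\times N}$, $\mathbf R_t\in\mathbb C^{M\times M}$, and $\sigma_h^2>0$; the estimation error is $\mathbf E=\mathbf R_r^{1/2}\mathbf E_w\mathbf R_t^{1/2}$ with $\mathrm{vec}(\mathbf E_w)\sim\mathcal{CN}(\mathbf 0,\sigma_h^2\mathbf I_{NM})$. Fix $\mathbf V=(\mathbf v_1,\dots,\mathbf v_K)\in\mathbb C^{M\times K}$ with $\|\mathbf v_i\|=1$, a nonzero receive filter $\mathbf u\in\mathbb C^N$ of the near user $k$, coefficients $\beta_k,\beta_{\tilde k}\ge0$ with $\beta_k^2+\beta_{\tilde k}^2=1$, $P>0$, $d_k>0$, $\ell(d)=d^{-\alpha}$ with $\alpha>2$, $\sigma^2\ge0$, and $\sigma_k^2=\sigma^2\|\mathbf u\|^2$. With no inter-cell interference, the SINR for decoding the far user's message at user $k$ (SIC step) and for decoding its own message are $$\mathrm{SINR}_{k\to\tilde k}=\frac{P\ell(d_k)|\mathbf u^{\mathrm H}\hat{\mathbf H}\mathbf v_k|^2\beta_{\tilde k}^2}{P\ell(d_k)\left(|\mathbf u^{\mathrm H}\mathbf E\mathbf v_k|^2\beta_{\tilde k}^2+|\mathbf u^{\mathrm H}(\hat{\mathbf H}+\mathbf E)\mathbf v_k|^2\beta_k^2+\sum_{i\ne k}|\mathbf u^{\mathrm H}(\hat{\mathbf H}+\mathbf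 E)\mathbf v_i|^2\right)+\sigma_k^2},$$ $$\mathrm{SINR}_k=\frac{P\ell(d_k)|\mathbf u^{\mathrm H}\hat{\mathbf H}\mathbf v_k|^2\beta_k^2}{P\ell(d_k)\left(|\mathbf u^{\mathrm H}\mathbf E\mathbf v_k|^2+\sum_{i\ne k}|\mathbf u^{\mathrm H}(\hat{\mathbf H}+\mathbf E)\mathbf v_i|^2\right)+\sigma_k^2}.$$ Define $\mu_i=\mathbf u^{\mathrm H}\hat{\mathbf H}\mathbf v_i$, $\boldsymbol\nu_1=(\mu_1,\dots,\mu_{k-1},\beta_k^2\mu_k,\mu_{k+1},\dots,\mu_K)^{\mathrm T}$, $\boldsymbol\nu_2=(\mu_1,\dots,\mu_{k-1},0,\mu_{k+1},\dots,\mu_K)^{\mathrm T}$, and $\boldsymbol\Sigma=\sigma_h^2(\mathbf u^{\mathrm H}\mathbf R_r\mathbf u)(\mathbf V^{\mathrm H}\mathbf R_t\mathbf V)^{\mathrm T}$ (the covariance of $(\mathbf u^{\mathrm H}\mathbf E\mathbf V)^{\mathrm T}$) with eigendecomposition $\boldsymbol\Sigma=\boldsymbol\Psi\boldsymbol\Delta\boldsymbol\Psi^{\mathrm H}$, $\boldsymbol\Psi=(\boldsymbol\psi_1,\dots,\boldsymbol\psi_K)$ unitary. *)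

From HB Require Import structures.
From mathcomp Require Import all_boot all_order all_algebra.
From mathcomp Require Import all_classical all_reals all_analysis.
From mathcomp Require Import complex.

Set Implicit Arguments.
Unset Strict Implicit.
Unset Printing Implicit Defensive.

Import Order.TTheory GRing.Theory Num.Theory.
Local Open Scope ring_scope.
Local Open Scope classical_set_scope.

Section Defs.
Variable R : realType.
Local Notation C := (R[i]).

Definition adjmx m n (A : 'M[C]_(m, n)) : 'M[C]_(n, m) := (map_mx (@conjc R) A)^T.

Definition abs2 (z : C) : R := complex.Re z ^+ 2 + complex.Im z ^+ 2.

Definition vnorm2 n (x : 'cV[C]_n) : R := \sum_(j < n) abs2 (x j 0).

Definition hermitian n (A : 'M[C]_n) : Prop := adjmx A = A.

Definition posdef n (A : 'M[C]_n) : Prop :=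
  hermitian A /\
  forall x : 'cV[C]_n, x != 0 -> 0 < complex.Re ((adjmx x *m A *m x) 0 0).

Definition unitary_mx n (U : 'M[C]_n) : Prop := adjmx U *m U = 1%:M.

Definition bform m n (a : 'cV[C]_m) (A : 'M[C]_(m, n)) (b : 'cV[C]_n) : C :=
  (adjmx a *m A *m b) 0 0.

Definition log2 (x : R) : R := ln x / ln 2.

Definition pathloss (alpha d : R) : R := d `^ (- alpha).

(* SINR for decoding the far user's message at near user k (SIC step) *)
Definition SINR_far N M K (Pw l sk2 bk bkt : R) (Hh E : 'M[C]_(N, M))
    (u : 'cV[C]_N) (V : 'M[C]_(M, K)) (k : 'I_K) : R :=
  Pw * l * abs2 (bform u Hh (col k V)) * bkt ^+ 2 /
  (Pw * l * (abs2 (bform u E (col k V)) * bkt ^+ 2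
             + abs2 (bform u (Hh + E) (col k V)) * bk ^+ 2
             + \sum_(i < K | i != k) abs2 (bform u (Hh + E) (col i V)))
   + sk2).

Definition SINR_near N M K (Pw l sk2 bk : R) (Hh E : 'M[C]_(N, M))
    (u : 'cV[C]_N) (V : 'M[C]_(M, K)) (k : 'I_K) : R :=
  Pw * l * abs2 (bform u Hh (col k V)) * bk ^+ 2 /
  (Pw * l * (abs2 (bform u E (col k V))
             + \sum_(i < K | i != k) abs2 (bform u (Hh + E) (col i V)))
   + sk2).

End Defs.

Section Prob.
Context {d : measure_display} {T : measurableType d} {R : realType}.
Variable P : probability T R.

(* mutual independence of a finite family of real random variables:
   product rule for every choice of Borel sets (taking [set: R] for some
   indices gives the product rule for every subfamily) *)
Definition mutually_independent (I : finType) (X : I -> T -> R) : Prop :=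
  forall B : I -> set R, (forall i, measurable (B i)) ->
    fine (P (\bigcap_(i in [set: I]) (X i @^-1` B i)))
    = \prod_(i : I) fine (P (X i @^-1` B i)).

(* G is a standard circularly-symmetric complex Gaussian random matrix:
   vec(G) ~ CN(0, I), i.e. the real and imaginary parts of all entries
   are mutually independent N(0, 1/2) random variables. *)
Definition std_complex_gaussian_mx N M (G : T -> 'M[R[i]]_(N, M)) : Prop :=
  let X := fun (t : 'I_N * 'I_M * bool) (w : T) =>
    if t.2 then complex.Re (G w t.1.1 t.1.2) else complex.Im (G w t.1.1 t.1.2) in
  (forall t, measurable_fun setT (X t)) /\
  (forall t (B : set R), measurable B ->
     P (X t @^-1` B) = normal_prob 0 (Num.sqrt (2^-1)) B) /\
  mutually_independent X.

End Prob.

(* As sigma_h -> 0 the estimation error E = sigma_h R_r^(1/2) G R_t^(1/2) vanishes,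
   and the interference-plus-noise levels in both SINR denominators deviate from
   their error-free values by at most sigma_h P l(d_k) (sum_i |mu_i|^2 + 4 W), where
   W = sum_i |u^H R_r^(1/2) G R_t^(1/2) v_i|^2 is a finite random variable.  By
   Parseval for the unitary Psi, the two hypotheses say that the error-free rates
   exceed the targets R_k~ and R_k; since log2 (1 + S / D) is continuous in D > 0,
   an outage forces sigma_h W >= eta for some fixed eta > 0.  Hence
   p_k <= P(W >= eta / sigma_h), which tends to 0 by continuity of P from above. *)

From HB Require Import structures.
From mathcomp Require Import all_boot all_order all_algebra.
From mathcomp Require Import all_classical all_reals all_analysis.
From mathcomp Require Import complex.
From mathcomp Require Import ring lra.
From mathcomp Require Import measurable_realfun.

Set Implicit Arguments.
Unset Strict Implicit.
Unset Printing Implicit Defensive.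
Import Order.TTheory GRing.Theory Num.Theory numFieldNormedType.Exports.
Local Open Scope classical_set_scope.
Local Open Scope ring_scope.

Section ComplexMatrix.
Variable R : realType.
Local Notation C := R[i].

Lemma abs2_ge0 (z : C) : 0 <= abs2 z.
Proof. by case: z => a b; rewrite /abs2 /= addr_ge0 // sqr_ge0. Qed.

Lemma abs2_0 : abs2 (0 : C) = 0.
Proof. by rewrite /abs2 /= expr0n add0r. Qed.

Lemma abs2_realM (x : R) (z : C) : abs2 (x%:C%C * z) = x ^+ 2 * abs2 z.
Proof. by case: z => a b; rewrite /abs2 /=; ring. Qed.

(* |a + x e|^2 - |a|^2 = 2 x Re (a^* e) + x^2 |e|^2 and 2 |Re (a^* e)| <= |a|^2 + |e|^2. *)
Lemma abs2_perturb (a e : C) (x : R) : 0 <= x <= 1 ->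
  `|abs2 (a + x%:C%C * e) - abs2 a| <= x * (abs2 a + 2 * abs2 e).
Proof.
case: a e => [a1 a2] [e1 e2] /andP[x0 x1]; rewrite /abs2 /= !mul0r !subr0 !addr0.
have hx2 : x ^+ 2 <= x by rewrite expr2 ler_piMl.
have [p1 p2] : 0 <= x * (a1 - e1) ^+ 2 /\ 0 <= x * (a2 - e2) ^+ 2.
  by split; rewrite mulr_ge0 ?sqr_ge0.
have [q1 q2] : 0 <= x * (a1 + e1) ^+ 2 /\ 0 <= x * (a2 + e2) ^+ 2.
  by split; rewrite mulr_ge0 ?sqr_ge0.
have [r1 r2] : 0 <= (x - x ^+ 2) * e1 ^+ 2 /\ 0 <= (x - x ^+ 2) * e2 ^+ 2.
  by split; rewrite mulr_ge0 ?sqr_ge0 ?subr_ge0.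
have [s1 s2] : 0 <= x ^+ 2 * e1 ^+ 2 /\ 0 <= x ^+ 2 * e2 ^+ 2.
  by split; rewrite mulr_ge0 ?sqr_ge0.
rewrite ler_norml; apply/andP; split; nra.
Qed.

Lemma bformD m n (a : 'cV[C]_m) (A B : 'M[C]_(m, n)) b :
  bform a (A + B) b = bform a A b + bform a B b.
Proof. by rewrite /bform mulmxDr mulmxDl mxE. Qed.

Lemma bformZ m n (a : 'cV[C]_m) (c : C) (A : 'M[C]_(m, n)) b :
  bform a (c *: A) b = c * bform a A b.
Proof. by rewrite /bform -scalemxAr -scalemxAl mxE. Qed.

Lemma bform0 m n (a : 'cV[C]_m) (b : 'cV[C]_n) : bform a 0 b = 0.
Proof. by rewrite /bform mulmx0 mul0mx mxE. Qed.

Lemma adjmxM m n p (A : 'M[C]_(m, n)) (B : 'M[C]_(n, p)) :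
  adjmx (A *m B) = adjmx B *m adjmx A.
Proof.
by rewrite /adjmx -trmx_mul (map_mxM (conjc : {rmorphism C -> C})).
Qed.

Lemma adjmxK m n (A : 'M[C]_(m, n)) : adjmx (adjmx A) = A.
Proof. by apply/matrixP => i j; rewrite /adjmx !mxE conjcK. Qed.

Lemma vnorm2E n (x : 'cV[C]_n) : vnorm2 x = complex.Re ((adjmx x *m x) 0 0).
Proof.
rewrite mxE (big_morph (@complex.Re R) (id1 := 0) (op1 := +%R)) //; last first.
  by move=> [? ?] [? ?].
apply: eq_bigr => i _; rewrite /adjmx !mxE.
by case: (x i 0) => a b; rewrite /abs2 /=; ring.
Qed.

Lemma vnorm2_unitary_coords n (Psi : 'M[C]_n) (x : 'cV[C]_n) : unitary_mx Psi ->
  \sum_(i < n) abs2 ((adjmx (col i Psi) *m x) 0 0) = vnorm2 x.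
Proof.
move=> /mulmx1C PsiPsiH.
have -> : \sum_(i < n) abs2 ((adjmx (col i Psi) *m x) 0 0) = vnorm2 (adjmx Psi *m x).
  apply: eq_bigr => i _; congr abs2.
  by rewrite !mxE; apply: eq_bigr => j _; rewrite /adjmx !mxE.
by rewrite !vnorm2E adjmxM adjmxK mulmxA -(mulmxA (adjmx x)) PsiPsiH mulmx1.
Qed.

End ComplexMatrix.

Section MeasurableComplex.
Context {R : realType} {d : measure_display} {T : measurableType d}.
Local Notation C := R[i].

Definition measurableC (f : T -> C) : Prop :=
  measurable_fun setT (fun w => complex.Re (f w)) /\
  measurable_fun setT (fun w => complex.Im (f w)).

Lemma measurableC_cst (c : C) : measurableC (fun _ => c).
Proof. by split; exact: measurable_cst. Qed.

Lemma measurableC_add f g : measurableC f -> measurableC g ->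
  measurableC (fun w => f w + g w).
Proof.
move=> [f1 f2] [g1 g2]; split.
- rewrite (_ : (fun w => _) = (fun w => complex.Re (f w)) \+ (fun w => complex.Re (g w))).
    exact: measurable_funD.
  by apply: funext => w /=; case: (f w) (g w) => [? ?] [? ?].
- rewrite (_ : (fun w => _) = (fun w => complex.Im (f w)) \+ (fun w => complex.Im (g w))).
    exact: measurable_funD.
  by apply: funext => w /=; case: (f w) (g w) => [? ?] [? ?].
Qed.

Lemma measurableC_mul f g : measurableC f -> measurableC g ->
  measurableC (fun w => f w * g w).
Proof.
move=> [f1 f2] [g1 g2]; split.
- rewrite (_ : (fun w => _) =
    ((fun w => complex.Re (f w)) \* (fun w => complex.Re (g w))) \-
    ((fun w => complex.Im (f w)) \* (fun w => complex.Im (g w)))).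
    by apply: measurable_funB; exact: measurable_funM.
  by apply: funext => w /=; case: (f w) (g w) => [? ?] [? ?].
- rewrite (_ : (fun w => _) =
    ((fun w => complex.Re (f w)) \* (fun w => complex.Im (g w))) \+
    ((fun w => complex.Im (f w)) \* (fun w => complex.Re (g w)))).
    by apply: measurable_funD; exact: measurable_funM.
  by apply: funext => w /=; case: (f w) (g w) => [? ?] [? ?].
Qed.

Lemma measurableC_sum (I : Type) (r : seq I) (F : I -> T -> C) :
  (forall i, measurableC (F i)) -> measurableC (fun w => \sum_(i <- r) F i w).
Proof.
move=> mF; elim: r => [|i r IHr].
  by under eq_fun do rewrite big_nil; exact: measurableC_cst.
by under eq_fun do rewrite big_cons; exact: measurableC_add.
Qed.

Lemma measurable_abs2 f : measurableC f -> measurable_fun setT (fun w => abs2 (f w)).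
Proof. by move=> [f1 f2]; apply: measurable_funD; exact: measurable_funX. Qed.

Lemma measurableC_mulmx m n p q (A : 'M[C]_(m, n)) (G : T -> 'M[C]_(n, p))
    (B : 'M[C]_(p, q)) :
  (forall i j, measurableC (fun w => G w i j)) ->
  forall i j, measurableC (fun w => (A *m G w *m B) i j).
Proof.
move=> mG i j; under eq_fun do rewrite mxE.
apply: measurableC_sum => l; apply: measurableC_mul; last exact: measurableC_cst.
under eq_fun do rewrite mxE.
by apply: measurableC_sum => h; apply: measurableC_mul => //; exact: measurableC_cst.
Qed.

Lemma measurableC_scalemx m n (c : C) (G : T -> 'M[C]_(m, n)) :
  (forall i j, measurableC (fun w => G w i j)) ->
  forall i j, measurableC (fun w => (c *: G w) i j).
Proof.
move=> mG i j; under eq_fun do rewrite mxE.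
by apply: measurableC_mul => //; exact: measurableC_cst.
Qed.

Lemma std_complex_gaussian_mx_measurableC (P : probability T R) m n
    (G : T -> 'M[C]_(m, n)) :
  std_complex_gaussian_mx P G -> forall i j, measurableC (fun w => G w i j).
Proof.
by case=> mG _ i j; split; [exact: (mG (i, j, true)) | exact: (mG (i, j, false))].
Qed.

End MeasurableComplex.

Section ProbabilityTail.
Context {R : realType} {d : measure_display} {T : measurableType d}.

Lemma measurable_bool_set (f : T -> bool) :
  measurable_fun setT f -> measurable [set w | f w].
Proof. by move=> mf; rewrite -[X in measurable X]setTI; exact: mf. Qed.

Lemma measurable_ge_set (W : T -> R) (c : R) :
  measurable_fun setT W -> measurable [set w | c <= W w].
Proof.
move=> mW; apply: measurable_bool_set.
by apply: measurable_fun_ler => //; exact: measurable_cst.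
Qed.

Variable P : probability T R.

Lemma probability_tail_lt (W : T -> R) (eps : R) :
  measurable_fun setT W -> 0 < eps ->
  exists n : nat, (P [set w | (n%:R <= W w)%R] < eps%:E)%E.
Proof.
move=> mW eps0; pose F n := [set w | (n%:R : R) <= W w].
have mF n : measurable (F n) by exact: measurable_ge_set.
have capF : \bigcap_n F n = set0.
  apply/seteqP; split => // w /(_ (Num.bound `|W w|) I); rewrite /F /=.
  have := le_lt_trans (ler_norm (W w)) (archi_boundP (normr_ge0 (W w))).
  by move=> /[swap] /le_lt_trans /[apply]; rewrite ltxx.
have F_decr : nonincreasing_seq F.
  by move=> n m nm; apply/subsetPset => w; apply: le_trans; rewrite ler_nat.
have F0_fin : (P (F 0%N) < +oo)%E.
  by rewrite (le_lt_trans (probability_le1 P (mF 0%N))) ?ltry.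
have := nonincreasing_cvg_mu F0_fin mF _ F_decr.
rewrite capF measure0 => /(_ measurable0).
move=> /fine_cvgP[_] /cvgrPdist_lt /(_ eps eps0) [n _ /(_ n (leqnn n))].
rewrite /= sub0r normrN => Pn; exists n.
by rewrite -(fineK (fin_num_measure P _ (mF n))) lte_fin (le_lt_trans (ler_norm _)).
Qed.

Lemma probability_scaled_tail_cvg0 {S : Type} {F : set_system S} {FF : Filter F}
    (A : S -> set T) (g : S -> R) (Z : T -> R) (eta : R) :
  0 < eta -> measurable_fun setT Z -> (forall s, measurable (A s)) ->
  g s @[s --> F] --> 0 -> (\forall s \near F, 0 <= g s) ->
  (\forall s \near F, A s `<=` [set w | eta <= g s * Z w]) ->
  P (A s) @[s --> F] --> 0%E.
Proof.
move=> eta0 mZ mA g0 g_ge0 A_sub.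
apply/fine_cvgP; split; first by apply: nearW => s; exact: fin_num_measure.
apply/cvgrPdist_lt => eps eps0.
have [n Pn] := probability_tail_lt mZ eps0.
have gn_small : \forall s \near F, g s * n%:R < eta.
  apply: (cvgr_lt 0) => //.
  by rewrite -(mul0r n%:R); apply: cvgM => //; exact: cvg_cst.
near=> s.
have gs0 : 0 <= g s by near: s.
have gsn : g s * n%:R < eta by near: s.
have As_sub : A s `<=` [set w | eta <= g s * Z w] by near: s.
have As_tail : A s `<=` [set w | n%:R <= Z w].
  move=> w /As_sub /= hw; rewrite leNgt; apply/negP => Zn.
  have : g s * Z w < eta by apply: le_lt_trans gsn; rewrite ler_wpM2l // ltW.
  by rewrite ltNge hw.
rewrite /= sub0r normrN ger0_norm ?fine_ge0 //.
rewrite -lte_fin fineK ?fin_num_measure //.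
apply: le_lt_trans Pn; apply: le_measure As_tail; rewrite inE //.
exact: measurable_ge_set.
Unshelve. all: by end_near.
Qed.

End ProbabilityTail.

Section Rates.
Variable R : realType.

Lemma powR2_gt1 (r : R) : 0 < r -> 1 < 2 `^ r.
Proof.
by move=> r0; rewrite /powR pnatr_eq0 expR_gt1 mulr_gt0 // ln_gt0 // ltr1n.
Qed.

Lemma log2_ltr (x r : R) : 0 < x -> (log2 x < r) = (x < 2 `^ r).
Proof.
move=> x0; have ln2_gt0 : 0 < ln (2 : R) by rewrite ln_gt0 // ltr1n.
rewrite /log2 ltr_pdivrMr // -ln_powR ltr_ln // posrE powR_gt0 //.
Qed.

Lemma ltr_log2 (x r : R) : 0 < x -> (r < log2 x) = (2 `^ r < x).
Proof.
move=> x0; have ln2_gt0 : 0 < ln (2 : R) by rewrite ln_gt0 // ltr1n.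
rewrite /log2 ltr_pdivlMr // -ln_powR ltr_ln // posrE powR_gt0 //.
Qed.

(* [S / 0 = 0], so a zero denominator gives the rate [log2 1 = 0]. *)
Lemma rate_ltE (S D r : R) : 0 <= S -> 0 <= D -> 0 < r ->
  (log2 (1 + S / D) < r) = (D == 0) || (S < (2 `^ r - 1) * D).
Proof.
move=> S0 D0 r0; have [->|Dn0] := eqVneq D 0.
  by rewrite invr0 mulr0 addr0 /log2 ln1 mul0r r0.
have Dpos : 0 < D by rewrite lt_def Dn0.
have pos : 0 < 1 + S / D by apply: lt_le_trans ltr01 _; rewrite lerDl divr_ge0.
by rewrite log2_ltr // -ltrBrDl ltr_pdivrMr.
Qed.

Lemma ltr_rateE (S D r : R) : 0 <= S -> 0 <= D -> 0 < r ->
  (r < log2 (1 + S / D)) = (0 < D) && ((2 `^ r - 1) * D < S).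
Proof.
move=> S0 D0 r0; have [->|Dn0] := eqVneq D 0.
  by rewrite ltxx invr0 mulr0 addr0 /log2 ln1 mul0r ltNge (ltW r0).
have Dpos : 0 < D by rewrite lt_def Dn0.
have pos : 0 < 1 + S / D by apply: lt_le_trans ltr01 _; rewrite lerDl divr_ge0.
by rewrite ltr_log2 // Dpos -ltrBlDl ltr_pdivlMr.
Qed.

Lemma rate_stable (S D0 r : R) : 0 <= S -> 0 <= D0 -> 0 < r ->
  r < log2 (1 + S / D0) ->
  exists2 eta, 0 < eta & forall D, `|D - D0| < eta -> r < log2 (1 + S / D).
Proof.
move=> S0 D00 r0; rewrite ltr_rateE // => /andP[D0pos cD0].
have c0 : 0 < 2 `^ r - 1 by rewrite subr_gt0 powR2_gt1.
set c := 2 `^ r - 1 in c0 cD0 *.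
exists (Num.min D0 ((S - c * D0) / c)).
  by rewrite lt_min D0pos divr_gt0 // subr_gt0.
move=> D; rewrite lt_min => /andP[nearD0 nearS].
have Dpos : 0 < D by move: nearD0; rewrite ltr_distl subrr => /andP[].
have : (D - D0) * c < S - c * D0.
  by rewrite -ltr_pdivlMr // (le_lt_trans (ler_norm _)).
rewrite mulrBl [D0 * c]mulrC ltrBlDr subrK mulrC => cD.
by rewrite ltr_rateE ?(ltW Dpos) // Dpos.
Qed.

End Rates.

Lemma measurable_rate_lt {R : realType} {d : measure_display} {T : measurableType d}
    (S r : R) (D : T -> R) :
  0 <= S -> 0 < r -> (forall w, 0 <= D w) -> measurable_fun setT D ->
  measurable [set w | log2 (1 + S / D w) < r].
Proof.
move=> S0 r0 D0 mD.
rewrite (_ : [set w | _] = [set w | (D w == 0) || (S < (2 `^ r - 1) * D w)]).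
  apply: measurable_bool_set; apply: measurable_or.
    by apply: measurable_fun_eqr => //; exact: measurable_cst.
  apply: measurable_fun_ltr; first exact: measurable_cst.
  by apply: measurable_funM => //; exact: measurable_cst.
by apply/seteqP; split => w /=; rewrite rate_ltE.
Qed.

Section SystemModel.
Variables (R : realType) (N M K : nat).
Local Notation C := R[i].
Variables (Hh : 'M[C]_(N, M)) (u : 'cV[C]_N) (V : 'M[C]_(M, K)) (k : 'I_K).

Definition effective_gain (H : 'M[C]_(N, M)) (i : 'I_K) : C := bform u H (col i V).

Definition gain_energy (H : 'M[C]_(N, M)) : R := \sum_(i < K) abs2 (effective_gain H i).

(* The bracket in the denominators of both SINRs: the weights are
   (bkt^2, bk^2) for the SIC step and (1, 0) for decoding the own message. *)
Definition interference (a b : R) (E : 'M[C]_(N, M)) : R :=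
  abs2 (effective_gain E k) * a + abs2 (effective_gain (Hh + E) k) * b
  + \sum_(i < K | i != k) abs2 (effective_gain (Hh + E) i).

Lemma interference_ge0 a b E : 0 <= a -> 0 <= b -> 0 <= interference a b E.
Proof.
move=> a0 b0; rewrite !addr_ge0 ?mulr_ge0 ?abs2_ge0 //.
by rewrite sumr_ge0 // => i _; exact: abs2_ge0.
Qed.

Lemma interference0 a b : interference a b 0 =
  abs2 (effective_gain Hh k) * b + \sum_(i < K | i != k) abs2 (effective_gain Hh i).
Proof. by rewrite /interference /effective_gain bform0 abs2_0 mul0r add0r addr0. Qed.

Lemma interference_scale a b (x : R) F :
  let mu := effective_gain Hh in let e := effective_gain F in
  interference a b (x%:C%C *: F) =
    abs2 (x%:C%C * e k) * a + abs2 (mu k + x%:C%C * e k) * b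
    + \sum_(i < K | i != k) abs2 (mu i + x%:C%C * e i).
Proof.
rewrite /interference /effective_gain bformD !bformZ.
by under eq_bigr do rewrite bformD bformZ.
Qed.

Lemma interference_lipschitz a b (x : R) F :
  0 <= a <= 1 -> 0 <= b <= 1 -> 0 <= x <= 1 ->
  `|interference a b (x%:C%C *: F) - interference a b 0|
    <= x * (gain_energy Hh + 4 * gain_energy F).
Proof.
move=> ha hb hx; rewrite interference_scale interference0.
set mu := effective_gain Hh; set e := effective_gain F.
have weighted (w t c : R) : 0 <= w <= 1 -> `|t| <= c -> `|t * w| <= c.
  case/andP=> w0 w1 tc; rewrite normrM (ger0_norm w0).
  by apply: le_trans tc; rewrite ler_piMr.
have dk0 := abs2_perturb 0 (e k) hx; rewrite add0r abs2_0 subr0 add0r in dk0.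
have dk := abs2_perturb (mu k) (e k) hx.
have dsum : `|\sum_(i < K | i != k) (abs2 (mu i + x%:C%C * e i) - abs2 (mu i))|
    <= x * (\sum_(i < K | i != k) abs2 (mu i) + 2 * \sum_(i < K | i != k) abs2 (e i)).
  rewrite mulr_sumr -big_split /= mulr_sumr.
  by apply: le_trans (ler_norm_sum _ _ _) _; apply: ler_sum => i _; exact: abs2_perturb.
have hE0 : 0 <= x * \sum_(i < K | i != k) abs2 (e i).
  by rewrite mulr_ge0 ?(andP hx).1 // sumr_ge0 // => i _; exact: abs2_ge0.
have energyD H : gain_energy H
    = abs2 (effective_gain H k) + \sum_(i < K | i != k) abs2 (effective_gain H i).
  by rewrite /gain_energy (bigD1 k).
rewrite !energyD -/mu -/e.
set D := (X in `|X|).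
have -> : D = (abs2 (x%:C%C * e k) - 0) * a
    + (abs2 (mu k + x%:C%C * e k) - abs2 (mu k)) * b
    + \sum_(i < K | i != k) (abs2 (mu i + x%:C%C * e i) - abs2 (mu i)).
  by rewrite /D sumrB; ring.
apply: le_trans (ler_normD _ _) _; rewrite subr0.
have := ler_normD (abs2 (x%:C%C * e k) * a)
  ((abs2 (mu k + x%:C%C * e k) - abs2 (mu k)) * b).
move: (weighted _ _ _ ha dk0) (weighted _ _ _ hb dk) dsum hE0; nra.
Qed.

Lemma interference_rate_stable (Pl sk2 S a b r : R) :
  0 < Pl -> 0 <= sk2 -> 0 <= S -> 0 < r -> 0 <= a <= 1 -> 0 <= b <= 1 ->
  r < log2 (1 + S / (Pl * interference a b 0 + sk2)) ->
  exists2 eta, 0 < eta & forall (x : R) F, 0 <= x <= 1 ->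
    x * (gain_energy Hh + 4 * gain_energy F) < eta ->
    r < log2 (1 + S / (Pl * interference a b (x%:C%C *: F) + sk2)).
Proof.
move=> Pl0 sk20 S0 r0 ha hb.
have D00 : 0 <= Pl * interference a b 0 + sk2.
  case/andP: ha => a0 _; case/andP: hb => b0 _.
  by rewrite addr_ge0 // mulr_ge0 ?interference_ge0 // ltW.
case/(rate_stable S0 D00 r0) => eta eta0 stable.
exists (eta / Pl) => [|x F hx small]; first exact: divr_gt0.
apply: stable; rewrite opprD addrACA subrr addr0 -mulrBr normrM gtr0_norm //.
rewrite mulrC -ltr_pdivlMr //; apply: le_lt_trans small.
exact: interference_lipschitz.
Qed.

Lemma SINR_farE Pw l sk2 bk bkt E :
  SINR_far Pw l sk2 bk bkt Hh E u V k =
  Pw * l * abs2 (effective_gain Hh k) * bkt ^+ 2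
    / (Pw * l * interference (bkt ^+ 2) (bk ^+ 2) E + sk2).
Proof. by []. Qed.

Lemma SINR_nearE Pw l sk2 bk E :
  SINR_near Pw l sk2 bk Hh E u V k =
  Pw * l * abs2 (effective_gain Hh k) * bk ^+ 2
    / (Pw * l * interference 1 0 E + sk2).
Proof. by rewrite /interference mulr1 mulr0 addr0. Qed.

Lemma SINR_far_noerror (Psi : 'M[C]_K) Pw l sk2 bk bkt :
  unitary_mx Psi -> 0 < Pw * l -> bk ^+ 2 + bkt ^+ 2 = 1 ->
  let mu := effective_gain Hh in
  let nu1 : 'cV[C]_K := \col_i (if i == k then (bk ^+ 2)%:C%C * mu i else mu i) in
  SINR_far Pw l sk2 bk bkt Hh 0 u V k =
  bkt ^+ 2 * abs2 (mu k) /
    (\sum_(i < K) abs2 ((adjmx (col i Psi) *m nu1) 0 0)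
     + bk ^+ 2 * bkt ^+ 2 * abs2 (mu k) + sk2 / (Pw * l)).
Proof.
move=> Psi_unitary Pl0 hb mu nu1.
rewrite vnorm2_unitary_coords // /vnorm2 (bigD1 k) //= mxE eqxx abs2_realM.
rewrite (eq_bigr (fun i => abs2 (mu i))); last by move=> i /negbTE ik; rewrite mxE ik.
have -> : (bk ^+ 2) ^+ 2 * abs2 (mu k) + \sum_(i < K | i != k) abs2 (mu i)
    + bk ^+ 2 * bkt ^+ 2 * abs2 (mu k) + sk2 / (Pw * l)
    = (Pw * l * interference (bkt ^+ 2) (bk ^+ 2) 0 + sk2) / (Pw * l).
  rewrite interference0 -/mu; have -> : bkt ^+ 2 = 1 - bk ^+ 2 by rewrite -hb addrC addKr.
  by field; move: (lt0r_neq0 Pl0); rewrite mulf_eq0 negb_or andbC.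
by rewrite (SINR_farE Pw l sk2 bk bkt 0) invf_div; ring.
Qed.

Lemma SINR_near_noerror (Psi : 'M[C]_K) Pw l sk2 bk :
  unitary_mx Psi -> 0 < Pw * l ->
  let mu := effective_gain Hh in
  let nu2 : 'cV[C]_K := \col_i (if i == k then 0 else mu i) in
  SINR_near Pw l sk2 bk Hh 0 u V k =
  abs2 (mu k) * bk ^+ 2 /
    (\sum_(i < K) abs2 ((adjmx (col i Psi) *m nu2) 0 0) + sk2 / (Pw * l)).
Proof.
move=> Psi_unitary Pl0 mu nu2.
rewrite vnorm2_unitary_coords // /vnorm2 (bigD1 k) //= mxE eqxx abs2_0 add0r.
rewrite (eq_bigr (fun i => abs2 (mu i))); last by move=> i /negbTE ik; rewrite mxE ik.
have -> : \sum_(i < K | i != k) abs2 (mu i) + sk2 / (Pw * l)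
    = (Pw * l * interference 1 0 0 + sk2) / (Pw * l).
  rewrite interference0 -/mu mulr0 add0r.
  by field; move: (lt0r_neq0 Pl0); rewrite mulf_eq0 negb_or andbC.
by rewrite (SINR_nearE Pw l sk2 bk 0) invf_div; ring.
Qed.

Lemma outage_forces_error Pw l sk2 bk bkt Rk Rkt :
  0 < Pw * l -> 0 <= sk2 -> bk ^+ 2 + bkt ^+ 2 = 1 -> 0 < Rkt -> 0 < Rk ->
  Rkt < log2 (1 + SINR_far Pw l sk2 bk bkt Hh 0 u V k) ->
  Rk < log2 (1 + SINR_near Pw l sk2 bk Hh 0 u V k) ->
  exists2 eta, 0 < eta & forall (x : R) F, 0 <= x <= 1 ->
    log2 (1 + SINR_far Pw l sk2 bk bkt Hh (x%:C%C *: F) u V k) < Rkt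
    \/ log2 (1 + SINR_near Pw l sk2 bk Hh (x%:C%C *: F) u V k) < Rk ->
    eta <= x * (gain_energy Hh + 4 * gain_energy F).
Proof.
move=> Pl0 sk20 hb hRkt hRk; rewrite SINR_farE SINR_nearE => far0 near0.
have mu0 : 0 <= Pw * l * abs2 (effective_gain Hh k) by rewrite mulr_ge0 ?abs2_ge0 // ltW.
have [wt wk] : 0 <= bkt ^+ 2 <= 1 /\ 0 <= bk ^+ 2 <= 1.
  by rewrite !sqr_ge0 -hb ?lerDl ?lerDr !sqr_ge0.
have [w1 w0] : 0 <= (1 : R) <= 1 /\ 0 <= (0 : R) <= 1 by rewrite ler01 !lexx.
have [eta1 eta1_gt0 far_ok] := interference_rate_stable Pl0 sk20
  (mulr_ge0 mu0 (sqr_ge0 bkt)) hRkt wt wk far0.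
have [eta2 eta2_gt0 near_ok] := interference_rate_stable Pl0 sk20
  (mulr_ge0 mu0 (sqr_ge0 bk)) hRk w1 w0 near0.
exists (Num.min eta1 eta2) => [|x F hx]; first by rewrite lt_min eta1_gt0.
rewrite SINR_farE SINR_nearE; apply: contraPP.
move/negP; rewrite -ltNge lt_min => /andP[small1 small2].
case=> out; [move: (far_ok _ _ hx small1) | move: (near_ok _ _ hx small2)].
all: by rewrite ltNge (ltW out).
Qed.

Context {d : measure_display} {T : measurableType d}.

Lemma measurable_effective_gain (A : 'M[C]_N) (G : T -> 'M[C]_(N, M)) (B : 'M[C]_M) :
  (forall p q, measurableC (fun w => G w p q)) ->
  forall i, measurableC (fun w => effective_gain (A *m G w *m B) i).
Proof.
move=> mG i; rewrite /effective_gain /bform.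
under eq_fun do rewrite !mulmxA -(mulmxA _ B).
exact: measurableC_mulmx.
Qed.

Variable E : T -> 'M[C]_(N, M).
Hypothesis mE : forall i, measurableC (fun w => effective_gain (E w) i).

Lemma measurable_gain_energy : measurable_fun setT (fun w => gain_energy (E w)).
Proof. by apply: measurable_sum => i; exact: measurable_abs2. Qed.

Lemma measurable_interference a b :
  measurable_fun setT (fun w => interference a b (E w)).
Proof.
have mgain i : measurableC (fun w => effective_gain (Hh + E w) i).
  rewrite /effective_gain; under eq_fun do rewrite bformD.
  by apply: measurableC_add; [exact: measurableC_cst | exact: mE].
under eq_fun do rewrite /interference big_mkcond /=.
apply: measurable_funD; first apply: measurable_funD.
- by apply: measurable_funM; [exact: measurable_abs2 | exact: measurable_cst].
- by apply: measurable_funM; [exact: measurable_abs2 | exact: measurable_cst].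
- apply: measurable_sum => i; case: (i != k); last exact: measurable_cst.
  exact: measurable_abs2.
Qed.

Lemma measurable_interference_rate_lt (S Pl sk2 a b r : R) :
  0 <= S -> 0 < Pl -> 0 <= sk2 -> 0 <= a -> 0 <= b -> 0 < r ->
  measurable [set w | log2 (1 + S / (Pl * interference a b (E w) + sk2)) < r].
Proof.
move=> S0 Pl0 sk20 a0 b0 r0; apply: measurable_rate_lt => // [w|].
  by rewrite addr_ge0 // mulr_ge0 ?interference_ge0 // ltW.
apply: measurable_funD; last exact: measurable_cst.
by apply: measurable_funM; [exact: measurable_cst | exact: measurable_interference].
Qed.

Lemma measurable_SINR_far_lt Pw l sk2 bk bkt r :
  0 < Pw * l -> 0 <= sk2 -> 0 < r ->
  measurable [set w | log2 (1 + SINR_far Pw l sk2 bk bkt Hh (E w) u V k) < r].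
Proof.
move=> Pl0 sk20 r0.
apply: (@measurable_interference_rate_lt (Pw * l * abs2 (effective_gain Hh k) * bkt ^+ 2)
  (Pw * l) sk2 (bkt ^+ 2) (bk ^+ 2)) => //; rewrite ?sqr_ge0 //.
by rewrite mulr_ge0 ?sqr_ge0 // mulr_ge0 ?abs2_ge0 // ltW.
Qed.

Lemma measurable_SINR_near_lt Pw l sk2 bk r :
  0 < Pw * l -> 0 <= sk2 -> 0 < r ->
  measurable [set w | log2 (1 + SINR_near Pw l sk2 bk Hh (E w) u V k) < r].
Proof.
move=> Pl0 sk20 r0; under eq_set => w do rewrite SINR_nearE.
apply: measurable_interference_rate_lt => //; rewrite ?ler01 ?lexx //.
by rewrite mulr_ge0 ?sqr_ge0 // mulr_ge0 ?abs2_ge0 // ltW.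
Qed.

End SystemModel.

Theorem theorem6
  (R : realType) (d : measure_display) (T : measurableType d)
  (P : probability T R)
  (N M K : nat) (hKMN : (K <= minn M N)%N) (k : 'I_K)
  (Hh : 'M[R[i]]_(N, M))
  (Rr Rrh : 'M[R[i]]_N) (Rt Rth : 'M[R[i]]_M)
  (hRr : posdef Rr) (hRt : posdef Rt)
  (hRrh : posdef Rrh /\ Rrh *m Rrh = Rr)   (* Rrh = R_r^{1/2} *)
  (hRth : posdef Rth /\ Rth *m Rth = Rt)   (* Rth = R_t^{1/2} *)
  (G : T -> 'M[R[i]]_(N, M)) (hG : std_complex_gaussian_mx P G)
  (V : 'M[R[i]]_(M, K)) (hV : forall i : 'I_K, vnorm2 (col i V) = 1)
  (u : 'cV[R[i]]_N) (hu : u != 0)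
  (bk bkt : R) (hbk : 0 <= bk) (hbkt : 0 <= bkt)
  (hb : bk ^+ 2 + bkt ^+ 2 = 1)
  (Pw dk alpha sigma2 : R) (hPw : 0 < Pw) (hdk : 0 < dk) (halpha : 2 < alpha)
  (hsigma2 : 0 <= sigma2)
  (Psi : 'M[R[i]]_K) (hPsi : unitary_mx Psi)
  (hdec : forall sh2 : R, 0 < sh2 ->
     exists Delta : 'M[R[i]]_K, is_diag_mx Delta /\
       (sh2%:C%C * bform u Rr u) *: (adjmx V *m Rt *m V)^T
       = Psi *m Delta *m adjmx Psi)
  (Rk Rkt : R) (hRk : 0 < Rk) (hRkt : 0 < Rkt) :
  let l := pathloss alpha dk in
  let sk2 := sigma2 * vnorm2 u in
  let mu := fun i : 'I_K => bform u Hh (col i V) in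
  let nu1 : 'cV[R[i]]_K :=
    \col_i (if i == k then (bk ^+ 2)%:C%C * mu i else mu i) in
  let nu2 : 'cV[R[i]]_K := \col_i (if i == k then 0 else mu i) in
  Rkt < log2 (1 + bkt ^+ 2 * abs2 (mu k) /
     (\sum_(i < K) abs2 ((adjmx (col i Psi) *m nu1) 0 0)
      + bk ^+ 2 * bkt ^+ 2 * abs2 (mu k) + sk2 / (Pw * l))) ->
  Rk < log2 (1 + abs2 (mu k) * bk ^+ 2 /
     (\sum_(i < K) abs2 ((adjmx (col i Psi) *m nu2) 0 0)
      + sk2 / (Pw * l))) ->
  let E := fun (sh2 : R) (w : T) =>
    Rrh *m ((Num.sqrt sh2)%:C%C *: G w) *m Rth in
  P [set w | log2 (1 + SINR_far Pw l sk2 bk bkt Hh (E sh2 w) u V k) < Rkt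
           \/ log2 (1 + SINR_near Pw l sk2 bk Hh (E sh2 w) u V k) < Rk]
    @[sh2 --> 0^'+] --> 0%E.
Proof.
move=> l sk2 mu nu1 nu2 hfar hnear E.
have Pl0 : 0 < Pw * l by rewrite mulr_gt0 // powR_gt0.
have sk20 : 0 <= sk2 by rewrite mulr_ge0 // sumr_ge0 // => i _; exact: abs2_ge0.
have far0 : Rkt < log2 (1 + SINR_far Pw l sk2 bk bkt Hh 0 u V k).
  by rewrite (SINR_far_noerror _ _ _ _ _ hPsi Pl0 hb).
have near0 : Rk < log2 (1 + SINR_near Pw l sk2 bk Hh 0 u V k).
  by rewrite (SINR_near_noerror _ _ _ _ _ _ hPsi Pl0).
have [eta eta_gt0 outage_error] := outage_forces_error Pl0 sk20 hb hRkt hRk far0 near0.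
have mG := std_complex_gaussian_mx_measurableC hG.
pose F w := Rrh *m G w *m Rth.
have EF s w : E s w = (Num.sqrt s)%:C%C *: F w by rewrite /E -scalemxAr -scalemxAl.
apply: (probability_scaled_tail_cvg0 P (g := Num.sqrt) (eta := eta)
  (Z := fun w => gain_energy u V Hh + 4 * gain_energy u V (F w))) => //.
- apply: measurable_funD; first exact: measurable_cst.
  apply: measurable_funM; first exact: measurable_cst.
  exact: (measurable_gain_energy (measurable_effective_gain _ _ _ _ mG)).
- have mE s i : measurableC (fun w => effective_gain u V (E s w) i).
    exact: measurable_effective_gain (measurableC_scalemx _ mG) i.
  move=> s; apply: measurableU; first exact: measurable_SINR_far_lt.
  exact: measurable_SINR_near_lt.
- rewrite -[X in _ --> X]sqrtr0; apply: cvg_at_right_filter; exact: sqrt_continuous.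
- by apply: nearW => s; exact: sqrtr_ge0.
near=> s => w /=; rewrite !EF; apply: outage_error.
by rewrite sqrtr_ge0 -sqrtr1 ler_sqrt //; near: s; exact: nbhs_right_le.
Unshelve. all: by end_near.
Qed.
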